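(* Let $(H,A,C)$ be a Doi-Hopf datum ($H$ a bialgebra). Then the $k$-modules $V_1,V_2,V_3,V_4,V_5$ defined below are isomorphic, via $k$-linear bijections that send normalized elements to normalized elements. Explicitly: $\nu\in V_1$ corresponds to $\lambda(c\otimes d)=\nu(c\otimes d\otimes 1_A)$ in $V_2$ (inverse $\nu(c\otimes d\otimes a)=a\cdot\lambda(c\otimes d)$); $\lambda\in V_2$ corresponds to $\theta=(\varepsilon_C\otimes I_A)\circ\lambda$ in $V_3$ (inverse $\lambda(c\otimes d)=\sum c_{(1)}\otimes\theta(c_{(2)}\otimes d)$); $\theta\in V_3$ corresponds to $\gamma(c)(d)=\theta(c\otimes d)$ in $V_4$; and $\gamma\in V_4$ corresponds to $\psi(c\otimes a)=a\cdot\gamma(c)$ in $V_5$ (inverse $\gamma(c)=\psi(c\otimes 1_A)$).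
   Context: $k$ commutative ring; Sweedler notation $\Delta(c)=\sum c_{(1)}\otimes c_{(2)}$, $\rho(m)=\sum m_{<-1>}\otimes m_{<0>}$ (iterated $m_{<-2>}\otimes m_{<-1>}\otimes m_{<0>}$). Doi-Hopf datum $(H,A,C)$: $H$ bialgebra, $A$ left $H$-comodule algebra, $C$ right $H$-module coalgebra, $C$ flat. $C\otimes A$ is an $A$-bimodule and left $C$-comodule via $a\cdot(c\otimes b)=c\otimes ab$, $(c\otimes b)\cdot a=\sum c\cdot a_{<-1>}\otimes ba_{<0>}$, $\rho(c\otimes b)=\sum c_{(1)}\otimes c_{(2)}\otimes b$; $C\otimes C\otimes A$ is a right $A$-module and left $C$-comodule via $(c\otimes d\otimes b)a=\sum c\cdot a_{<-2>}\otimes d\cdot a_{<-1>}\otimes ba_{<0>}$ and coaction on the first factor. $\mathrm{Hom}(C,A)$ is an $A$-bimodule via $(a\cdot f)(c)=\sum a_{<0>}f(c\cdot a_{<-1>})$, $(f\cdot a)(c)=f(c)a$. For $x=\sum_i c_i\otimes a_i\in C\otimes A$ or $x\in A$ we write the auxiliary expression $D(d,\theta):=\sum d\cdot\theta_{<-1>}\otimes\theta_{<0>}$ for $d\in C,\theta\in A$. $V_1$: maps $\nu:C\otimes C\otimes A\to C\otimes A$ that are right $A$-linear and left $C$-colinear, with $\nu(c\otimes d\otimes ba)=b\cdot\nu(c\otimes d\otimes a)$ and $\sum D(d_{(2)},(\varepsilon\otimes I)\nu(c\otimes d_{(1)}\otimes 1))=\nu(c\otimes d\otimes 1)$; normalized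 if $\sum\nu(c_{(1)}\otimes c_{(2)}\otimes a)=c\otimes a$. $V_2$: maps $\lambda:C\otimes C\to C\otimes A$ with $\sum D(d_{(2)},(\varepsilon\otimes I)\lambda(c\otimes d_{(1)}))=\lambda(c\otimes d)$, $\sum a_{<0>}\cdot\lambda(c\cdot a_{<-2>}\otimes d\cdot a_{<-1>})=\lambda(c\otimes d)\cdot a$, $\sum c_{(1)}\otimes\lambda(c_{(2)}\otimes d)=\rho(\lambda(c\otimes d))$; normalized if $\sum\lambda(c_{(1)}\otimes c_{(2)})=c\otimes 1_A$. $V_3$: maps $\theta:C\otimes C\to A$ with $\theta(c\otimes d)a=\sum a_{<0>}\theta(c\cdot a_{<-2>}\otimes d\cdot a_{<-1>})$ and $\sum c_{(1)}\otimes\theta(c_{(2)}\otimes d)=\sum D(d_{(2)},\theta(c\otimes d_{(1)}))$; normalized if $\sum\theta(c_{(1)}\otimes c_{(2)})=\varepsilon(c)1_A$. $V_4$: maps $\gamma:C\to\mathrm{Hom}(C,A)$ with $\sum a_{<0>}\gamma(c\cdot a_{<-2>})(d\cdot a_{<-1>})=\gamma(c)(d)\,a$ and $\sum c_{(1)}\otimes\gamma(c_{(2)})(d)=\sum D(d_{(2)},\gamma(c)(d_{(1)}))$; normalized if $\sum\gamma(c_{(1)})(c_{(2)})=\varepsilon(c)1_A$. $V_5$: $A$-bimodule maps $\psi:C\otimes A\to\mathrm{Hom}(C,A)$ with $\sum c_{(1)}\otimes\psi(c_{(2)}\otimes 1_A)(d)=\sum D(d_{(2)},\psi(c\otimes 1_A)(d_{(1)}))$;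 normalized if $\sum\psi(c_{(1)}\otimes 1_A)(c_{(2)})=\varepsilon(c)1_A$. All identities are required for all $a,b\in A$, $c,d\in C$. *)

(* Tensor products over the commutative ring k are given by
   their universal property. *)
From HB Require Import structures.
From mathcomp Require Import all_boot all_order all_algebra.
From Stdlib Require Import ClassicalEpsilon.
Set Implicit Arguments. Unset Strict Implicit. Unset Printing Implicit Defensive.
Import GRing.Theory.
Local Open Scope ring_scope.

Definition lin (k : comPzRingType) (M N : lmodType k) (f : M -> N) :=
  forall (a : k) (x y : M), f (a *: x + y) = a *: f x + f y.

Definition linK (k : comPzRingType) (M : lmodType k) (f : M -> k) :=
  forall (a : k) (x y : M), f (a *: x + y) = a * f x + f y.

Definition bilin (k : comPzRingType) (M N P : lmodType k) (f : M -> N -> P) :=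
  (forall m : M, lin (f m)) /\ (forall n : N, lin (fun m => f m n)).

Record tensor (k : comPzRingType) (M N : lmodType k) := Tensor {
  tT : lmodType k;
  tmul : M -> N -> tT;
  tmul_bilin : bilin tmul;
  tuniv : forall (P : lmodType k) (f : M -> N -> P), bilin f ->
    exists! g : tT -> P, lin g /\ forall m n, g (tmul m n) = f m n }.
Arguments tmul {k M N} t _ _.
Arguments tT {k M N} t.

Definition tlift (k : comPzRingType) (M N : lmodType k) (T : tensor M N)
    (P : lmodType k) (f : M -> N -> P) : tT T -> P :=
  epsilon (inhabits (fun _ => 0))
    (fun g : tT T -> P => lin g /\ forall m n, g (tmul T m n) = f m n).
Arguments tlift {k M N} T {P} f _.

Record doi_hopf (k : comPzRingType) := DoiHopf {
  H : algType k;  A : algType k;  C : lmodType k;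
  HH : tensor H H;  HHH : tensor H (tT HH);
  HA : tensor H A;  HHA : tensor H (tT HA);
  CC : tensor C C;  CCC : tensor C (tT CC);
  CA : tensor C A;  CCA : tensor C (tT CA);  CCCA : tensor C (tT CCA);
  DeltaH : H -> tT HH;  epsH : H -> k;
  rhoA : A -> tT HA;
  DeltaC : C -> tT CC;  epsC : C -> k;
  actC : C -> H -> C;
  DeltaH_lin : lin DeltaH;  epsH_lin : linK epsH;
  DeltaH_coass : forall h,
    tlift HH (fun h1 h2 => tmul HHH h1 (DeltaH h2)) (DeltaH h) =
    tlift HH (fun h1 h2 => tlift HH (fun x y => tmul HHH x (tmul HH y h2))
                                  (DeltaH h1)) (DeltaH h);
  epsH_counitl : forall h, tlift HH (fun h1 h2 => epsH h1 *: h2) (DeltaH h) = h;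
  epsH_counitr : forall h, tlift HH (fun h1 h2 => epsH h2 *: h1) (DeltaH h) = h;
  DeltaH_mul : forall h g, DeltaH (h * g) =
    tlift HH (fun h1 h2 => tlift HH (fun g1 g2 => tmul HH (h1 * g1) (h2 * g2))
                                  (DeltaH g)) (DeltaH h);
  DeltaH_one : DeltaH 1 = tmul HH 1 1;
  epsH_mul : forall h g, epsH (h * g) = epsH h * epsH g;
  epsH_one : epsH 1 = 1;
  rhoA_lin : lin rhoA;
  rhoA_coass : forall a,
    tlift HA (fun h b => tmul HHA h (rhoA b)) (rhoA a) =
    tlift HA (fun h b => tlift HH (fun h1 h2 => tmul HHA h1 (tmul HA h2 b))
                                 (DeltaH h)) (rhoA a);
  rhoA_counit : forall a, tlift HA (fun h b => epsH h *: b) (rhoA a) = a;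
  rhoA_mul : forall a b, rhoA (a * b) =
    tlift HA (fun h1 a1 => tlift HA (fun h2 b2 => tmul HA (h1 * h2) (a1 * b2))
                                   (rhoA b)) (rhoA a);
  rhoA_one : rhoA 1 = tmul HA 1 1;
  DeltaC_lin : lin DeltaC;  epsC_lin : linK epsC;
  DeltaC_coass : forall c,
    tlift CC (fun c1 c2 => tmul CCC c1 (DeltaC c2)) (DeltaC c) =
    tlift CC (fun c1 c2 => tlift CC (fun x y => tmul CCC x (tmul CC y c2))
                                  (DeltaC c1)) (DeltaC c);
  epsC_counitl : forall c, tlift CC (fun c1 c2 => epsC c1 *: c2) (DeltaC c) = c;
  epsC_counitr : forall c, tlift CC (fun c1 c2 => epsC c2 *: c1) (DeltaC c) = c;
  actC_bilin : bilin actC;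
  actC_mul : forall c h g, actC c (h * g) = actC (actC c h) g;
  actC_one : forall c, actC c 1 = c;
  DeltaC_act : forall c h, DeltaC (actC c h) =
    tlift CC (fun c1 c2 => tlift HH (fun h1 h2 => tmul CC (actC c1 h1) (actC c2 h2))
                                  (DeltaH h)) (DeltaC c);
  epsC_act : forall c h, epsC (actC c h) = epsC c * epsH h;
  C_flat : forall (M N : lmodType k) (TM : tensor C M) (TN : tensor C N) (f : M -> N),
    lin f -> injective f -> injective (tlift TM (fun c m => tmul TN c (f m)))
}.

Section DoiHopfSpaces.
Context (k : comPzRingType) (D : doi_hopf k).
Local Notation H := (H D). Local Notation A := (A D). Local Notation C := (C D).
Local Notation HA := (HA D). Local Notation CC := (CC D). Local Notation CA := (CA D).
Local Notation CCA := (CCA D). Local Notation CCCA := (CCCA D).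
Local Notation rho := (@rhoA k D). Local Notation Dl := (@DeltaC k D).
Local Notation eC := (@epsC k D). Local Notation act := (@actC k D).

Definition Dexp (d : C) (th : A) : tT CA :=
  tlift HA (fun h a0 => tmul CA (act d h) a0) (rho th).

Definition epsI (x : tT CA) : A := tlift CA (fun c a => eC c *: a) x.

Definition lactCA (a : A) (x : tT CA) : tT CA :=
  tlift CA (fun c b => tmul CA c (a * b)) x.
Definition ractCA (x : tT CA) (a : A) : tT CA :=
  tlift CA (fun c b => tlift HA (fun h a0 => tmul CA (act c h) (b * a0)) (rho a)) x.
Definition rhoCA (x : tT CA) : tT CCA :=
  tlift CA (fun c b => tlift CC (fun c1 c2 => tmul CCA c1 (tmul CA c2 b)) (Dl c)) x.

Definition ractCCA (y : tT CCA) (a : A) : tT CCA :=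
  tlift CCA (fun c x => tlift CA (fun d b =>
     tlift HA (fun h a' => tlift HA (fun h' a0 =>
         tmul CCA (act c h) (tmul CA (act d h') (b * a0))) (rho a')) (rho a)) x) y.
Definition rhoCCA (y : tT CCA) : tT CCCA :=
  tlift CCA (fun c x => tlift CC (fun c1 c2 => tmul CCCA c1 (tmul CCA c2 x)) (Dl c)) y.

Definition lactHom (a : A) (f : C -> A) : C -> A :=
  fun c => tlift HA (fun h a0 => a0 * f (act c h)) (rho a).
Definition ractHom (f : C -> A) (a : A) : C -> A := fun c => f c * a.

Definition twistCA (a : A) (F : H -> H -> tT CA) : tT CA :=
  tlift HA (fun h a' => tlift HA (fun h' a0 => lactCA a0 (F h h')) (rho a')) (rho a).
Definition twistA (a : A) (F : H -> H -> A) : A :=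
  tlift HA (fun h a' => tlift HA (fun h' a0 => a0 * F h h') (rho a')) (rho a).

Definition V1 (nu : tT CCA -> tT CA) : Prop :=
  [/\ lin nu,
      forall y a, nu (ractCCA y a) = ractCA (nu y) a,
      forall y, rhoCA (nu y) = tlift CCCA (fun c z => tmul CCA c (nu z)) (rhoCCA y),
      forall c d a b, nu (tmul CCA c (tmul CA d (b * a))) =
                      lactCA b (nu (tmul CCA c (tmul CA d a)))
    & forall c d, tlift CC (fun d1 d2 => Dexp d2 (epsI (nu (tmul CCA c (tmul CA d1 1)))))
                           (Dl d) = nu (tmul CCA c (tmul CA d 1))].
Definition N1 (nu : tT CCA -> tT CA) : Prop :=
  forall c a, tlift CC (fun c1 c2 => nu (tmul CCA c1 (tmul CA c2 a))) (Dl c) = tmul CA c a.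

Definition V2 (la : tT CC -> tT CA) : Prop :=
  [/\ lin la,
      forall c d, tlift CC (fun d1 d2 => Dexp d2 (epsI (la (tmul CC c d1)))) (Dl d)
                  = la (tmul CC c d),
      forall c d a, twistCA a (fun h h' => la (tmul CC (act c h) (act d h')))
                    = ractCA (la (tmul CC c d)) a
    & forall c d, tlift CC (fun c1 c2 => tmul CCA c1 (la (tmul CC c2 d))) (Dl c)
                  = rhoCA (la (tmul CC c d))].
Definition N2 (la : tT CC -> tT CA) : Prop :=
  forall c, tlift CC (fun c1 c2 => la (tmul CC c1 c2)) (Dl c) = tmul CA c 1.

Definition V3 (th : tT CC -> A) : Prop :=
  [/\ lin th,
      forall c d a, th (tmul CC c d) * a
                    = twistA a (fun h h' => th (tmul CC (act c h) (act d h')))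
    & forall c d, tlift CC (fun c1 c2 => tmul CA c1 (th (tmul CC c2 d))) (Dl c)
                  = tlift CC (fun d1 d2 => Dexp d2 (th (tmul CC c d1))) (Dl d)].
Definition N3 (th : tT CC -> A) : Prop :=
  forall c, tlift CC (fun c1 c2 => th (tmul CC c1 c2)) (Dl c) = eC c *: 1.

Definition V4 (ga : C -> C -> A) : Prop :=
  [/\ forall c, lin (ga c),
      forall a c c' d, ga (a *: c + c') d = a *: ga c d + ga c' d,
      forall c d a, twistA a (fun h h' => ga (act c h) (act d h')) = ga c d * a
    & forall c d, tlift CC (fun c1 c2 => tmul CA c1 (ga c2 d)) (Dl c)
                  = tlift CC (fun d1 d2 => Dexp d2 (ga c d1)) (Dl d)].
Definition N4 (ga : C -> C -> A) : Prop :=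
  forall c, tlift CC (fun c1 c2 => ga c1 c2) (Dl c) = eC c *: 1.

Definition V5 (ps : tT CA -> C -> A) : Prop :=
  [/\ forall x, lin (ps x),
      forall a x x' d, ps (a *: x + x') d = a *: ps x d + ps x' d,
      forall a x, ps (lactCA a x) = lactHom a (ps x),
      forall x a, ps (ractCA x a) = ractHom (ps x) a
    & forall c d, tlift CC (fun c1 c2 => tmul CA c1 (ps (tmul CA c2 1) d)) (Dl c)
                  = tlift CC (fun d1 d2 => Dexp d2 (ps (tmul CA c 1) d1)) (Dl d)].
Definition N5 (ps : tT CA -> C -> A) : Prop :=
  forall c, tlift CC (fun c1 c2 => ps (tmul CA c1 1) c2) (Dl c) = eC c *: 1.

Definition F12 (nu : tT CCA -> tT CA) : tT CC -> tT CA :=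
  tlift CC (fun c d => nu (tmul CCA c (tmul CA d 1))).
Definition G21 (la : tT CC -> tT CA) : tT CCA -> tT CA :=
  tlift CCA (fun c x => tlift CA (fun d a => lactCA a (la (tmul CC c d))) x).
Definition F23 (la : tT CC -> tT CA) : tT CC -> A := fun x => epsI (la x).
Definition G32 (th : tT CC -> A) : tT CC -> tT CA :=
  tlift CC (fun c d => tlift CC (fun c1 c2 => tmul CA c1 (th (tmul CC c2 d))) (Dl c)).
Definition F34 (th : tT CC -> A) : C -> C -> A := fun c d => th (tmul CC c d).
Definition G43 (ga : C -> C -> A) : tT CC -> A := tlift CC ga.
Definition F45 (ga : C -> C -> A) : tT CA -> C -> A :=
  fun x d => tlift CA (fun c a => lactHom a (ga c) d) x.
Definition G54 (ps : tT CA -> C -> A) : C -> C -> A := fun c => ps (tmul CA c 1).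

End DoiHopfSpaces.

Definition norm_bij (X Y : Type) (V N : X -> Prop) (W M : Y -> Prop)
    (F : X -> Y) (G : Y -> X) : Prop :=
  [/\ forall x, V x -> W (F x),
      forall y, W y -> V (G y),
      forall x, V x -> G (F x) = x,
      forall y, W y -> F (G y) = y
    & forall x, V x -> (N x <-> M (F x))].

(* k-linearity of maps between spaces of functions into k-modules *)
Definition comb1 (k : comPzRingType) (X : Type) (M : lmodType k)
    (a : k) (f g : X -> M) : X -> M := fun x => a *: f x + g x.
Definition comb2 (k : comPzRingType) (X Y : Type) (M : lmodType k)
    (a : k) (f g : X -> Y -> M) : X -> Y -> M := fun x y => a *: f x y + g x y.

(* Every space V_i is carved out of a space of k-linear maps on a tensor
   product, so all correspondences reduce to identities between k-linear maps
   that can be checked on pure tensors.  V_1 ~ V_2 because a left A-linear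
   map on C (x) C (x) A is determined by its values on c (x) d (x) 1.
   V_2 ~ V_3 because a left C-colinear map lambda into C (x) A is recovered
   from (eps_C (x) I) o lambda by the counit law of the coaction; the
   compatibility with the right A-action is transported along lambda using
   coassociativity of rho_A and the module-coalgebra axiom
   Delta_C(c.h) = c_(1).h_(1) (x) c_(2).h_(2).  V_3 ~ V_4 is the universal
   property of C (x) C, and V_4 ~ V_5 says that a left A-linear map on C (x) A
   is determined by its values on c (x) 1. *)
From HB Require Import structures.
From mathcomp Require Import all_boot all_order all_algebra.
From Stdlib Require Import ClassicalEpsilon FunctionalExtensionality.
Set Implicit Arguments. Unset Strict Implicit. Unset Printing Implicit Defensive.
Import GRing.Theory.
Local Open Scope ring_scope.

Section LinearMaps.
Variable k : comPzRingType.
Implicit Types M N P : lmodType k.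

Lemma lin0 M N (f : M -> N) : lin f -> f 0 = 0.
Proof.
move=> lf; have := lf 1 0 0; rewrite !scale1r !addr0 => E.
by apply: (addrI (f 0)); rewrite addr0 -E.
Qed.

Lemma linD M N (f : M -> N) x y : lin f -> f (x + y) = f x + f y.
Proof. by move=> lf; have := lf 1 x y; rewrite !scale1r. Qed.

Lemma linZ M N (f : M -> N) a x : lin f -> f (a *: x) = a *: f x.
Proof. by move=> lf; have := lf a x 0; rewrite (lin0 lf) !addr0. Qed.

Lemma lin_id M : lin (fun x : M => x). Proof. by []. Qed.

Lemma lin_zero M N : lin (fun _ : M => 0 : N).
Proof. by move=> a x y; rewrite scaler0 addr0. Qed.

Lemma lin_comp M N P (g : N -> P) (f : M -> N) :
  lin g -> lin f -> lin (fun x => g (f x)).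
Proof. by move=> lg lf a x y; rewrite lf lg. Qed.

Lemma lin_add M N (f g : M -> N) : lin f -> lin g -> lin (fun x => f x + g x).
Proof.
move=> lf lg a x y; rewrite lf lg scalerDr -!addrA; congr (_ + _).
by rewrite addrCA.
Qed.

Lemma lin_scale M N (c : k) (f : M -> N) : lin f -> lin (fun x => c *: f x).
Proof. by move=> lf a x y; rewrite lf scalerDr !scalerA mulrC. Qed.

Lemma lin_scalar_l M N (e : M -> k) (v : N) : linK e -> lin (fun x => e x *: v).
Proof. by move=> le a x y; rewrite le scalerDl scalerA. Qed.

Lemma linK_comp M N (e : N -> k) (f : M -> N) :
  linK e -> lin f -> linK (fun x => e (f x)).
Proof. by move=> le lf a x y; rewrite lf le. Qed.

Lemma linK_mulr M (e : M -> k) (c : k) : linK e -> linK (fun x => e x * c).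
Proof. by move=> le a x y; rewrite le mulrDl mulrA. Qed.

Lemma linK_mull M (e : M -> k) (c : k) : linK e -> linK (fun x => c * e x).
Proof. by move=> le a x y; rewrite le mulrDr mulrCA. Qed.

Lemma bilin_l M N P (f : M -> N -> P) n : bilin f -> lin (fun m => f m n).
Proof. by case. Qed.

Lemma bilin_r M N P (f : M -> N -> P) m : bilin f -> lin (f m).
Proof. by case. Qed.

Lemma lin_mull (A : algType k) (b : A) : lin (fun x : A => b * x).
Proof. by move=> a x y; rewrite mulrDr scalerAr. Qed.

Lemma lin_mulr (A : algType k) (b : A) : lin (fun x : A => x * b).
Proof. by move=> a x y; rewrite mulrDl scalerAl. Qed.

End LinearMaps.

Section TensorUniversal.
Variables (k : comPzRingType) (M N : lmodType k) (T : tensor M N).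
Implicit Types P : lmodType k.

Lemma tmul_l n : lin (fun m => tmul T m n). Proof. by case: (tmul_bilin T). Qed.
Lemma tmul_r m : lin (tmul T m). Proof. by case: (tmul_bilin T). Qed.

Lemma tmulZl a m n : tmul T (a *: m) n = a *: tmul T m n.
Proof. exact: (linZ _ _ (tmul_l n)). Qed.
Lemma tmulZr a m n : tmul T m (a *: n) = a *: tmul T m n.
Proof. exact: (linZ _ _ (tmul_r m)). Qed.
Lemma tmulDl m m' n : tmul T (m + m') n = tmul T m n + tmul T m' n.
Proof. exact: (linD _ _ (tmul_l n)). Qed.

Lemma tlift_spec P (f : M -> N -> P) : bilin f ->
  lin (tlift T f) /\ forall m n, tlift T f (tmul T m n) = f m n.
Proof.
move=> bf; rewrite /tlift; apply epsilon_spec.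
by case: (tuniv T bf) => g [Hg _]; exists g.
Qed.

Lemma lin_tlift P (f : M -> N -> P) : bilin f -> lin (tlift T f).
Proof. by case/tlift_spec. Qed.

Lemma tliftE P (f : M -> N -> P) m n : bilin f -> tlift T f (tmul T m n) = f m n.
Proof. by case/tlift_spec=> _ ->. Qed.

Lemma tensor_ext P (g1 g2 : tT T -> P) : lin g1 -> lin g2 ->
  (forall m n, g1 (tmul T m n) = g2 (tmul T m n)) -> g1 = g2.
Proof.
move=> l1 l2 E.
have bg : bilin (fun m n => g1 (tmul T m n)).
  by split=> [m|n]; apply: lin_comp => //; [exact: tmul_r | exact: tmul_l].
case: (tuniv T bg) => g [_ g_uniq].
rewrite -(g_uniq g1 (conj l1 (fun _ _ => erefl))).
by rewrite -(g_uniq g2 (conj l2 (fun m n => esym (E m n)))).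
Qed.

Lemma tlift_extP P (f f' : M -> N -> P) x :
  (forall m n, f m n = f' m n) -> tlift T f x = tlift T f' x.
Proof.
move=> E; suff -> : f = f' by [].
by apply: functional_extensionality => m; apply: functional_extensionality.
Qed.

Lemma tlift_comp (P Q : lmodType k) (g : P -> Q) (f : M -> N -> P) x :
  lin g -> bilin f -> g (tlift T f x) = tlift T (fun m n => g (f m n)) x.
Proof.
move=> lg bf.
have bgf : bilin (fun m n => g (f m n)).
  by split=> [m|n]; apply: lin_comp => //; [exact: bilin_r | exact: bilin_l].
move: x; apply: equal_f; apply: tensor_ext.
- exact: lin_comp (lin_tlift bf).
- exact: lin_tlift.
by move=> m n; rewrite !tliftE.
Qed.

Lemma lin_tlift_eval (X P : lmodType k) (F : X -> M -> N -> P) z :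
  (forall p, bilin (F p)) -> (forall m n, lin (fun p => F p m n)) ->
  lin (fun p => tlift T (F p) z).
Proof.
move=> bF lF a p q; move: z; apply: equal_f.
apply: (tensor_ext (g2 := fun z => a *: tlift T (F p) z + tlift T (F q) z)).
- exact: lin_tlift.
- by apply: lin_add; [apply: lin_scale|]; apply: lin_tlift.
by move=> m n; rewrite !tliftE // lF.
Qed.

Lemma tlift_lin_comb P a (f g : M -> N -> P) x : bilin f -> bilin g ->
  tlift T (fun m n => a *: f m n + g m n) x = a *: tlift T f x + tlift T g x.
Proof.
move=> bf bg; move: x; apply: equal_f.
apply: (tensor_ext (g2 := fun x => a *: tlift T f x + tlift T g x)).
- apply: lin_tlift; split=> [m|n]; (apply: lin_add; [apply: lin_scale|]);
    by [apply: bilin_r | apply: bilin_l].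
- by apply: lin_add; [apply: lin_scale|]; apply: lin_tlift.
move=> m n; rewrite !tliftE //; split=> [m'|n']; (apply: lin_add; [apply: lin_scale|]);
  by [apply: bilin_r | apply: bilin_l].
Qed.

End TensorUniversal.

Section TensorFubini.
Variable k : comPzRingType.

Lemma tlift_exchange (M N M' N' P : lmodType k) (T : tensor M N) (T' : tensor M' N')
    (g : M -> N -> M' -> N' -> P) x y :
  (forall m n, bilin (g m n)) -> (forall m' n', bilin (fun m n => g m n m' n')) ->
  tlift T (fun m n => tlift T' (g m n) y) x =
  tlift T' (fun m' n' => tlift T (fun m n => g m n m' n') x) y.
Proof.
move=> bg bg'.
have inner y0 : bilin (fun m n => tlift T' (g m n) y0).
  split=> [m|n].
  - by apply: (lin_tlift_eval (F := fun n => g m n)) => // m0 n0; case: (bg' m0 n0).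
  - by apply: (lin_tlift_eval (F := fun m => g m n)) => // m0 n0; case: (bg' m0 n0).
have outer : bilin (fun m' n' => tlift T (fun m n => g m n m' n') x).
  split=> [m'|n'].
  - by apply: (lin_tlift_eval (F := fun n' m n => g m n m' n')) => // m n; case: (bg m n).
  - by apply: (lin_tlift_eval (F := fun m' m n => g m n m' n')) => // m n; case: (bg m n).
move: y; apply: equal_f; apply: tensor_ext.
- apply: (lin_tlift_eval (F := fun y m n => tlift T' (g m n) y)) => // m n.
  exact: lin_tlift.
- exact: lin_tlift.
move=> m' n'; rewrite tliftE //; apply: tlift_extP => m n.
by rewrite tliftE.
Qed.

Lemma tensor_ext2 (M N O P : lmodType k) (T' : tensor N O) (T : tensor M (tT T'))
    (g1 g2 : tT T -> P) :
  lin g1 -> lin g2 ->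
  (forall m n o, g1 (tmul T m (tmul T' n o)) = g2 (tmul T m (tmul T' n o))) -> g1 = g2.
Proof.
move=> l1 l2 E; apply: tensor_ext => // m; apply: equal_f.
by apply: tensor_ext; [exact: lin_comp (tmul_r T m) | exact: lin_comp (tmul_r T m) |].
Qed.

End TensorFubini.

(* Discharges the linearity side conditions of [tliftE] and [tlift_comp] by
   recursion on the shape of the map; atomic linear maps live in [lin_db]. *)
Create HintDb lin_db.
#[export] Hint Extern 1 (lin _) =>
  first [exact: lin_mull | exact: lin_mulr | exact: tmul_l | exact: tmul_r
        | exact: rhoA_lin | exact: DeltaC_lin | exact: DeltaH_lin] : lin_db.
#[export] Hint Extern 1 (linK _) => first [exact: epsC_lin | exact: epsH_lin] : lin_db.

Ltac lin_tac :=
  try unfold lactHom, ractHom, twistA, twistCA, F45, G54, F12, G21, F23, G32,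
             F34, G43, comb1, comb2;
  cbv beta;
  match goal with
  | |- forall _, _ => intro; lin_tac
  | |- bilin _ => first [assumption | split; intro; lin_tac]
  | |- linK _ => linK_tac
  | |- lin (fun x => x) => exact: lin_id
  | |- lin id => exact: lin_id
  | |- lin (fun _ => 0) => exact: lin_zero
  | |- lin (fun x => @?f x + @?g x) => apply: (lin_add (f:=f) (g:=g)); lin_tac
  | |- lin (fun x => ?c *: @?f x) => apply: (lin_scale c (f:=f)); lin_tac
  | |- lin (fun x => @?e x *: ?v) => apply: (lin_scalar_l (e:=e) v); linK_tac
  | |- lin (fun x => tlift ?T ?g (@?f x)) =>
      apply: (lin_comp (g:=tlift T g) (f:=f)); [apply: lin_tlift; lin_tac | lin_tac]
  | |- lin (fun x => tlift ?T (@?F x) ?z) =>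
      apply: (@lin_tlift_eval _ _ _ T _ _ F z); [intro; lin_tac | intros; lin_tac]
  | |- lin (fun x => ?g (@?f x)) => apply: (lin_comp (g:=g) (f:=f)); [lin_base | lin_tac]
  | |- lin (fun x => ?g (@?f x) ?n) =>
      apply: (lin_comp (g:=fun m => g m n) (f:=f)); [lin_base | lin_tac]
  | |- lin (fun x => ?g (@?f x) ?n ?n2) =>
      apply: (lin_comp (g:=fun m => g m n n2) (f:=f)); [lin_base | lin_tac]
  | |- lin ?g => lin_base
  end
with linK_tac :=
  cbv beta;
  match goal with
  | |- linK (fun x => @?e x * ?c) => apply: (linK_mulr (e:=e) c); linK_tac
  | |- linK (fun x => ?c * @?e x) => apply: (linK_mull (e:=e) c); linK_tac
  | |- linK (fun x => ?e (@?f x)) => apply: (linK_comp (e:=e) (f:=f)); [linK_base | lin_tac]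
  | |- linK ?e => linK_base
  end
with linK_base := first [assumption | solve [eauto with lin_db]]
with lin_base :=
  first [ assumption
        | solve [eauto with lin_db]
        | (apply: bilin_l; eassumption) | (apply: bilin_r; eassumption)
        | apply: lin_tlift; lin_tac ].

Ltac tlift_beta := rewrite tliftE; try solve [lin_tac].
Ltac tlift_push g := rewrite (tlift_comp (g:=g)); try solve [lin_tac].
Ltac tensor_ind x := move: x; apply: equal_f; apply: tensor_ext; [lin_tac | lin_tac |].
Ltac tensor_ind2 x := move: x; apply: equal_f; apply: tensor_ext2; [lin_tac | lin_tac |].
Ltac funext2 :=
  apply: functional_extensionality => ?; apply: functional_extensionality => ?.

Section DoiHopf.
Variables (k : comPzRingType) (D : doi_hopf k).
Local Notation H := (H D). Local Notation A := (A D). Local Notation C := (C D).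
Local Notation HA := (HA D). Local Notation HH := (HH D). Local Notation HHA := (HHA D).
Local Notation CC := (CC D). Local Notation CCC := (CCC D). Local Notation CA := (CA D).
Local Notation CCA := (CCA D). Local Notation CCCA := (CCCA D).
Local Notation rho := (@rhoA k D). Local Notation Dl := (@DeltaC k D).
Local Notation eC := (@epsC k D). Local Notation eH := (@epsH k D).
Local Notation act := (@actC k D). Local Notation DH := (@DeltaH k D).
Local Notation V1 := (@V1 k D). Local Notation V2 := (@V2 k D).
Local Notation V3 := (@V3 k D). Local Notation V4 := (@V4 k D).
Local Notation V5 := (@V5 k D).

Lemma lin_actl h : lin (fun c => act c h). Proof. by case: (actC_bilin D). Qed.
Lemma lin_actr c : lin (act c). Proof. by case: (actC_bilin D). Qed.
#[local] Hint Extern 1 (lin _) => first [exact: lin_actl | exact: lin_actr] : lin_db.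

Lemma lin_lactCA (a : A) : lin (lactCA a). Proof. rewrite /lactCA; lin_tac. Qed.
Lemma lin_lactCA_l (x : tT CA) : lin (fun a : A => lactCA a x).
Proof. rewrite /lactCA; lin_tac. Qed.
Lemma lin_ractCA (a : A) : lin (fun x => ractCA x a). Proof. rewrite /ractCA; lin_tac. Qed.
Lemma lin_ractCA_r (x : tT CA) : lin (ractCA x). Proof. rewrite /ractCA; lin_tac. Qed.
Lemma lin_rhoCA : lin (@rhoCA k D). Proof. rewrite /rhoCA; lin_tac. Qed.
Lemma lin_epsI : lin (@epsI k D). Proof. rewrite /epsI; lin_tac. Qed.
Lemma lin_Dexp (d : C) : lin (Dexp d). Proof. rewrite /Dexp; lin_tac. Qed.
Lemma lin_Dexp_l (th : A) : lin (fun d => Dexp d th). Proof. rewrite /Dexp; lin_tac. Qed.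
Lemma lin_ractCCA (a : A) : lin (fun y => ractCCA y a). Proof. rewrite /ractCCA; lin_tac. Qed.
Lemma lin_rhoCCA : lin (@rhoCCA k D). Proof. rewrite /rhoCCA; lin_tac. Qed.
#[local] Hint Extern 1 (lin _) =>
  first [exact: lin_lactCA | exact: lin_lactCA_l | exact: lin_ractCA | exact: lin_ractCA_r
        | exact: lin_rhoCA | exact: lin_epsI | exact: lin_Dexp | exact: lin_Dexp_l
        | exact: lin_ractCCA | exact: lin_rhoCCA] : lin_db.

Lemma lactCA_tmul (a : A) c b : lactCA a (tmul CA c b) = tmul CA c (a * b).
Proof. by rewrite /lactCA; tlift_beta. Qed.

Lemma ractCA_tmul (a : A) c b :
  ractCA (tmul CA c b) a = tlift HA (fun h a0 => tmul CA (act c h) (b * a0)) (rho a).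
Proof. by rewrite /ractCA; tlift_beta. Qed.

Lemma rhoCA_tmul c b :
  rhoCA (tmul CA c b) = tlift CC (fun c1 c2 => tmul CCA c1 (tmul CA c2 b)) (Dl c).
Proof. by rewrite /rhoCA; tlift_beta. Qed.

Lemma epsI_tmul c b : epsI (tmul CA c b) = eC c *: b.
Proof. by rewrite /epsI; tlift_beta. Qed.

Lemma ractCCA_tmul (a : A) c d b :
  ractCCA (tmul CCA c (tmul CA d b)) a =
  tlift HA (fun h a' => tlift HA (fun h' a0 =>
    tmul CCA (act c h) (tmul CA (act d h') (b * a0))) (rho a')) (rho a).
Proof. by rewrite /ractCCA; tlift_beta; tlift_beta. Qed.

Lemma rhoCCA_tmul c x :
  rhoCCA (tmul CCA c x) = tlift CC (fun c1 c2 => tmul CCCA c1 (tmul CCA c2 x)) (Dl c).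
Proof. by rewrite /rhoCCA; tlift_beta. Qed.

Lemma lactCAM (a b : A) x : lactCA a (lactCA b x) = lactCA (a * b) x.
Proof. by tensor_ind x => c b'; rewrite !lactCA_tmul mulrA. Qed.

Lemma lactCA1 (x : tT CA) : lactCA 1 x = x.
Proof. by tensor_ind x => c b; rewrite lactCA_tmul mul1r. Qed.

Lemma lactCA_ractCA (a b : A) x : lactCA b (ractCA x a) = ractCA (lactCA b x) a.
Proof.
tensor_ind x => c b'; rewrite ractCA_tmul lactCA_tmul ractCA_tmul.
by tlift_push (lactCA b); apply: tlift_extP => h a0; rewrite lactCA_tmul mulrA.
Qed.

Lemma rhoCA_lactCA (a : A) x :
  rhoCA (lactCA a x) = tlift CCA (fun c z => tmul CCA c (lactCA a z)) (rhoCA x).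
Proof.
tensor_ind x => c b; rewrite lactCA_tmul !rhoCA_tmul.
tlift_push (tlift CCA (fun c z => tmul CCA c (lactCA a z))).
by apply: tlift_extP => c1 c2; tlift_beta; rewrite lactCA_tmul.
Qed.

Lemma epsI_lactCA (a : A) x : epsI (lactCA a x) = a * epsI x.
Proof. by tensor_ind x => c b; rewrite lactCA_tmul !epsI_tmul scalerAr. Qed.

Lemma epsI_ractCA (a : A) x : epsI (ractCA x a) = epsI x * a.
Proof.
tensor_ind x => c b; rewrite ractCA_tmul epsI_tmul; tlift_push (@epsI k D).
transitivity (eC c *: (b * tlift HA (fun h a0 => eH h *: a0) (rho a))).
  tlift_push (fun z => eC c *: (b * z)); apply: tlift_extP => h a0.
  by rewrite epsI_tmul epsC_act -scalerA -scalerAr.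
by rewrite rhoA_counit scalerAl.
Qed.

Lemma rhoCA_counit x : tlift CCA (fun c z => tmul CA c (epsI z)) (rhoCA x) = x.
Proof.
tensor_ind x => c b; rewrite rhoCA_tmul.
tlift_push (tlift CCA (fun c z => tmul CA c (epsI z))).
transitivity (tmul CA (tlift CC (fun c1 c2 => eC c2 *: c1) (Dl c)) b).
  tlift_push (fun z => tmul CA z b); apply: tlift_extP => c1 c2.
  by tlift_beta; rewrite epsI_tmul tmulZl tmulZr.
by rewrite (epsC_counitr c).
Qed.

Lemma rhoA_coass_sum (P : lmodType k) (F : H -> H -> A -> P) (a : A) :
  (forall g h, lin (F g h)) -> (forall g b, lin (fun h => F g h b)) ->
  (forall h b, lin (fun g => F g h b)) ->
  tlift HA (fun g b => tlift HA (fun h b' => F g h b') (rho b)) (rho a) =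
  tlift HA (fun g b' => tlift HH (fun g1 g2 => F g1 g2 b') (DH g)) (rho a).
Proof.
move=> F1 F2 F3; pose Phi := tlift HHA (fun g z => tlift HA (F g) z).
transitivity (Phi (tlift HA (fun h b => tmul HHA h (rho b)) (rho a))).
  by tlift_push Phi; apply: tlift_extP => g b; rewrite /Phi; tlift_beta.
rewrite rhoA_coass; tlift_push Phi; apply: tlift_extP => g b'; tlift_push Phi.
by apply: tlift_extP => g1 g2; rewrite /Phi; tlift_beta; tlift_beta.
Qed.

Lemma DeltaC_coass_sum (P : lmodType k) (F : C -> C -> C -> P) (c : C) :
  (forall x y, lin (F x y)) -> (forall x z, lin (fun y => F x y z)) ->
  (forall y z, lin (fun x => F x y z)) ->
  tlift CC (fun c1 c2 => tlift CC (F c1) (Dl c2)) (Dl c) =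
  tlift CC (fun c1 c2 => tlift CC (fun x y => F x y c2) (Dl c1)) (Dl c).
Proof.
move=> F1 F2 F3; pose Phi := tlift CCC (fun c z => tlift CC (F c) z).
transitivity (Phi (tlift CC (fun c1 c2 => tmul CCC c1 (Dl c2)) (Dl c))).
  by tlift_push Phi; apply: tlift_extP => g b; rewrite /Phi; tlift_beta.
rewrite DeltaC_coass; tlift_push Phi; apply: tlift_extP => g b'; tlift_push Phi.
by apply: tlift_extP => g1 g2; rewrite /Phi; tlift_beta; tlift_beta.
Qed.

Lemma F12E (nu : tT CCA -> tT CA) c d : lin nu ->
  F12 nu (tmul CC c d) = nu (tmul CCA c (tmul CA d 1)).
Proof. by move=> ln; rewrite /F12; tlift_beta. Qed.

Lemma G21E (la : tT CC -> tT CA) c d a : lin la ->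
  G21 la (tmul CCA c (tmul CA d a)) = lactCA a (la (tmul CC c d)).
Proof. by move=> ll; rewrite /G21; tlift_beta; tlift_beta. Qed.

Lemma F12_V2 nu : V1 nu -> V2 (F12 nu).
Proof.
case=> lnu nu_ract nu_rho nu_lact nu_D; split.
- lin_tac.
- move=> c d; rewrite F12E // -nu_D.
  by apply: tlift_extP => d1 d2; rewrite F12E.
- move=> c d a; rewrite F12E // -nu_ract ractCCA_tmul /twistCA.
  tlift_push nu; apply: tlift_extP => h a'; tlift_push nu; apply: tlift_extP => h' a0.
  by rewrite F12E // -nu_lact mul1r mulr1.
- move=> c d; rewrite F12E // nu_rho rhoCCA_tmul.
  tlift_push (tlift CCCA (fun c z => tmul CCA c (nu z))).
  by apply: tlift_extP => c1 c2; tlift_beta; rewrite F12E.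
Qed.

Lemma G21_V1 la : V2 la -> V1 (G21 la).
Proof.
case=> lla la_D la_twist la_rho; have lG : lin (G21 la) by lin_tac.
split=> //.
- move=> y a; tensor_ind2 y => c d b.
  rewrite G21E // -lactCA_ractCA -la_twist /twistCA ractCCA_tmul.
  tlift_push (G21 la); tlift_push (lactCA b); apply: tlift_extP => h a'.
  tlift_push (G21 la); tlift_push (lactCA b); apply: tlift_extP => h' a0.
  by rewrite G21E // lactCAM.
- move=> y; tensor_ind2 y => c d b.
  rewrite G21E // rhoCA_lactCA -la_rho rhoCCA_tmul.
  tlift_push (tlift CCA (fun c z => tmul CCA c (lactCA b z))).
  tlift_push (tlift CCCA (fun c z => tmul CCA c (G21 la z))).
  by apply: tlift_extP => c1 c2; tlift_beta; tlift_beta; rewrite G21E.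
- by move=> c d a b; rewrite !G21E // lactCAM.
- move=> c d; rewrite G21E // lactCA1 -la_D.
  by apply: tlift_extP => d1 d2; rewrite G21E // lactCA1.
Qed.

Lemma F12K nu : V1 nu -> G21 (F12 nu) = nu.
Proof.
case=> lnu _ _ nu_lact _; apply: tensor_ext2; try solve [lin_tac].
move=> c d a; rewrite G21E; last by lin_tac.
by rewrite F12E // -nu_lact mulr1.
Qed.

Lemma G21K la : V2 la -> F12 (G21 la) = la.
Proof.
case=> lla _ _ _; apply: tensor_ext; try solve [lin_tac].
by move=> c d; rewrite F12E ?G21E ?lactCA1 //; lin_tac.
Qed.

Lemma N1_F12 nu : V1 nu -> N1 nu <-> N2 (F12 nu).
Proof.
case=> lnu _ _ nu_lact _; split.
- move=> N c; rewrite -(N c 1).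
  by apply: tlift_extP => c1 c2; rewrite F12E.
- move=> N c a.
  transitivity (lactCA a (tlift CC (fun c1 c2 => F12 nu (tmul CC c1 c2)) (Dl c))).
    tlift_push (lactCA a); apply: tlift_extP => c1 c2.
    by rewrite F12E // -nu_lact mulr1.
  by rewrite N lactCA_tmul mulr1.
Qed.

Lemma F12_comb a nu nu' : V1 nu -> V1 nu' ->
  F12 (comb1 a nu nu') = comb1 a (F12 nu) (F12 nu').
Proof.
case=> lnu _ _ _ _ [lnu' _ _ _ _]; apply: tensor_ext; try solve [lin_tac].
by move=> c d; rewrite F12E ?[comb1 _ _ _ _]/comb1 ?F12E //; lin_tac.
Qed.

Lemma G32E (th : tT CC -> A) c d : lin th ->
  G32 th (tmul CC c d) = tlift CC (fun c1 c2 => tmul CA c1 (th (tmul CC c2 d))) (Dl c).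
Proof. by move=> lth; rewrite /G32; tlift_beta. Qed.

Lemma epsI_G32 (th : tT CC -> A) c d : lin th ->
  epsI (G32 th (tmul CC c d)) = th (tmul CC c d).
Proof.
move=> lth; rewrite G32E //; tlift_push (@epsI k D).
transitivity (th (tmul CC (tlift CC (fun c1 c2 => eC c1 *: c2) (Dl c)) d)).
  tlift_push (fun z => th (tmul CC z d)); apply: tlift_extP => c1 c2.
  by rewrite epsI_tmul tmulZl (linZ _ _ lth).
by rewrite epsC_counitl.
Qed.

Lemma V2_expand (la : tT CC -> tT CA) c d : V2 la ->
  la (tmul CC c d) =
  tlift CC (fun c1 c2 => tmul CA c1 (epsI (la (tmul CC c2 d)))) (Dl c).
Proof.
case=> lla _ _ la_rho; rewrite -{1}(rhoCA_counit (la (tmul CC c d))) -la_rho.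
by tlift_push (tlift CCA (fun c z => tmul CA c (epsI z))); apply: tlift_extP => c1 c2; tlift_beta.
Qed.

Lemma F23K la : V2 la -> G32 (F23 la) = la.
Proof.
move=> Vla; have [lla _ _ _] := Vla; apply: tensor_ext; try solve [lin_tac].
by move=> c d; rewrite G32E; [rewrite (V2_expand c d Vla) | lin_tac].
Qed.

Lemma G32K (th : tT CC -> A) : lin th -> F23 (G32 th) = th.
Proof.
move=> lth; apply: tensor_ext; try solve [lin_tac].
by move=> c d; rewrite /F23 epsI_G32.
Qed.

Lemma F23_V3 la : V2 la -> V3 (F23 la).
Proof.
move=> Vla; have [lla la_D la_twist _] := Vla; rewrite /F23; split.
- lin_tac.
- move=> c d a; rewrite -epsI_ractCA -la_twist /twistCA /twistA.
  tlift_push (@epsI k D); apply: tlift_extP => h a'; tlift_push (@epsI k D).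
  by apply: tlift_extP => h' a0; rewrite epsI_lactCA.
- by move=> c d; rewrite -(V2_expand c d Vla) la_D.
Qed.

Lemma twistCA_G32 (th : tT CC -> A) (a : A) c d : lin th ->
  twistCA a (fun h h' => G32 th (tmul CC (act c h) (act d h'))) =
  tlift CC (fun c1 c2 => tlift HA (fun h a' => tlift HH (fun h1 h2 =>
    tlift HA (fun h' a0 =>
      tmul CA (act c1 h1) (a0 * th (tmul CC (act c2 h2) (act d h')))) (rho a'))
    (DH h)) (rho a)) (Dl c).
Proof.
move=> lth.
transitivity (tlift HA (fun h a' => tlift HA (fun h' a0 =>
   tlift CC (fun c1 c2 => tlift HH (fun h1 h2 =>
     tmul CA (act c1 h1) (a0 * th (tmul CC (act c2 h2) (act d h')))) (DH h)) (Dl c))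
   (rho a')) (rho a)).
  rewrite /twistCA; apply: tlift_extP => h a'; apply: tlift_extP => h' a0.
  rewrite G32E // DeltaC_act.
  tlift_push (tlift CC (fun x1 x2 => tmul CA x1 (th (tmul CC x2 (act d h'))))).
  tlift_push (lactCA a0); apply: tlift_extP => c1 c2.
  tlift_push (tlift CC (fun x1 x2 => tmul CA x1 (th (tmul CC x2 (act d h'))))).
  tlift_push (lactCA a0); apply: tlift_extP => h1 h2.
  by tlift_beta; rewrite lactCA_tmul.
etransitivity.
  by apply: tlift_extP => h a'; apply: tlift_exchange; lin_tac.
rewrite tlift_exchange; try solve [lin_tac].
apply: tlift_extP => c1 c2; apply: tlift_extP => h a'.
by apply: tlift_exchange; lin_tac.
Qed.

Lemma ractCA_G32 (th : tT CC -> A) (a : A) c d : V3 th ->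
  ractCA (G32 th (tmul CC c d)) a =
  tlift CC (fun c1 c2 => tlift HA (fun h a' => tlift HH (fun h1 h2 =>
    tlift HA (fun h' a0 =>
      tmul CA (act c1 h1) (a0 * th (tmul CC (act c2 h2) (act d h')))) (rho a'))
    (DH h)) (rho a)) (Dl c).
Proof.
case=> lth th_twist _; rewrite G32E //; tlift_push (fun x => ractCA x a).
apply: tlift_extP => c1 c2; rewrite ractCA_tmul.
transitivity (tlift HA (fun g b => tlift HA (fun h b' => tlift HA (fun h' a0 =>
     tmul CA (act c1 g) (a0 * th (tmul CC (act c2 h) (act d h')))) (rho b'))
   (rho b)) (rho a)).
  apply: tlift_extP => g b; rewrite th_twist /twistA.
  tlift_push (tmul CA (act c1 g)); apply: tlift_extP => h b'.
  by tlift_push (tmul CA (act c1 g)).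
apply: (rhoA_coass_sum (F := fun g h b' => tlift HA (fun h' a0 =>
  tmul CA (act c1 g) (a0 * th (tmul CC (act c2 h) (act d h')))) (rho b'))); lin_tac.
Qed.

Lemma rhoCA_G32 (th : tT CC -> A) c d : lin th ->
  rhoCA (G32 th (tmul CC c d)) =
  tlift CC (fun c1 c2 => tmul CCA c1 (G32 th (tmul CC c2 d))) (Dl c).
Proof.
move=> lth; symmetry.
transitivity (tlift CC (fun c1 c2 => tlift CC (fun x y =>
   tmul CCA c1 (tmul CA x (th (tmul CC y d)))) (Dl c2)) (Dl c)).
  by apply: tlift_extP => c1 c2; rewrite G32E //; tlift_push (tmul CCA c1).
rewrite (DeltaC_coass_sum (F := fun c1 x y =>
  tmul CCA c1 (tmul CA x (th (tmul CC y d))))); try solve [lin_tac].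
rewrite G32E //; tlift_push (@rhoCA k D).
by apply: tlift_extP => c1 c2; rewrite rhoCA_tmul.
Qed.

Lemma G32_V2 th : V3 th -> V2 (G32 th).
Proof.
move=> Vth; have [lth _ th_D] := Vth; split.
- lin_tac.
- move=> c d; rewrite G32E // th_D.
  by apply: tlift_extP => d1 d2; rewrite epsI_G32.
- by move=> c d a; rewrite twistCA_G32 // ractCA_G32.
- by move=> c d; rewrite rhoCA_G32.
Qed.

Lemma G32_N2 (th : tT CC -> A) : lin th -> N3 th -> N2 (G32 th).
Proof.
move=> lth th_N c.
transitivity (tlift CC (fun c1 c2 => tlift CC (fun x y =>
   tmul CA x (th (tmul CC y c2))) (Dl c1)) (Dl c)).
  by apply: tlift_extP => c1 c2; rewrite G32E.
rewrite -(DeltaC_coass_sum (F := fun x y z => tmul CA x (th (tmul CC y z))));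
  try solve [lin_tac].
transitivity (tlift CC (fun c1 c2 =>
   tmul CA c1 (tlift CC (fun x y => th (tmul CC x y)) (Dl c2))) (Dl c)).
  by apply: tlift_extP => c1 c2; tlift_push (tmul CA c1).
transitivity (tmul CA (tlift CC (fun c1 c2 => eC c2 *: c1) (Dl c)) 1).
  tlift_push (fun z => tmul CA z (1 : A)).
  by apply: tlift_extP => c1 c2; rewrite th_N tmulZl tmulZr.
by rewrite epsC_counitr.
Qed.

Lemma N2_F23 la : V2 la -> N2 la <-> N3 (F23 la).
Proof.
move=> Vla; have [lla _ _ _] := Vla; split=> [la_N c | ].
  by rewrite /F23 -(tlift_comp (g := @epsI k D)) ?la_N ?epsI_tmul //; lin_tac.
by rewrite -{2}(F23K Vla); apply: G32_N2; lin_tac.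
Qed.

Lemma F23_comb a (la la' : tT CC -> tT CA) :
  F23 (comb1 a la la') = comb1 a (F23 la) (F23 la').
Proof. by apply: functional_extensionality => x; rewrite /F23 /comb1 lin_epsI. Qed.

Lemma V4_bilin (ga : C -> C -> A) : V4 ga -> bilin ga.
Proof. by case=> ga_r ga_l _ _; split=> // d a c c'; apply: ga_l. Qed.

Lemma F34_V4 th : V3 th -> V4 (F34 th).
Proof.
case=> lth th_twist th_D; rewrite /F34; split=> //.
- by move=> c; lin_tac.
- by move=> a c c' d; apply: (lin_comp lth (tmul_l _ d)).
Qed.

Lemma G43_V3 ga : V4 ga -> V3 (G43 ga).
Proof.
move=> Vga; have bga := V4_bilin Vga; case: Vga => _ _ ga_twist ga_D.
rewrite /G43; split.
- exact: lin_tlift.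
- move=> c d a; tlift_beta; rewrite -ga_twist /twistA.
  by apply: tlift_extP => h a'; apply: tlift_extP => h' a0; tlift_beta.
- move=> c d.
  transitivity (tlift CC (fun c1 c2 => tmul CA c1 (ga c2 d)) (Dl c)).
    by apply: tlift_extP => c1 c2; tlift_beta.
  by rewrite ga_D; apply: tlift_extP => d1 d2; tlift_beta.
Qed.

Lemma F34K (th : tT CC -> A) : lin th -> G43 (F34 th) = th.
Proof.
move=> lth; rewrite /G43 /F34; apply: tensor_ext => //; first by lin_tac.
by move=> m n; tlift_beta.
Qed.

Lemma G43K (ga : C -> C -> A) : bilin ga -> F34 (G43 ga) = ga.
Proof. by move=> bga; rewrite /G43 /F34; funext2; tlift_beta. Qed.

Lemma lactHomM (b a : A) (f : C -> A) d : lin f ->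
  lactHom (b * a) f d = tlift HA (fun g b0 => tlift HA (fun g' a0 =>
      (b0 * a0) * f (act (act d g) g')) (rho a)) (rho b).
Proof.
move=> lf; rewrite /lactHom rhoA_mul; tlift_push (tlift HA (fun h a0 => a0 * f (act d h))).
apply: tlift_extP => g b0; tlift_push (tlift HA (fun h a0 => a0 * f (act d h))).
by apply: tlift_extP => g' a0; tlift_beta; rewrite actC_mul.
Qed.

Lemma lactHom1 (f : C -> A) d : lin f -> lactHom 1 f d = f d.
Proof. by move=> lf; rewrite /lactHom rhoA_one; tlift_beta; rewrite actC_one mul1r. Qed.

Lemma lactHomA (b a : A) (f : C -> A) d : lin f ->
  lactHom b (lactHom a f) d = lactHom (b * a) f d.
Proof.
move=> lf; rewrite lactHomM // {1}/lactHom; apply: tlift_extP => g b0.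
by rewrite /lactHom; tlift_push (fun z => b0 * z); apply: tlift_extP => g' a0; rewrite mulrA.
Qed.

Lemma F45E (ga : C -> C -> A) c a d : bilin ga ->
  F45 ga (tmul CA c a) d = lactHom a (ga c) d.
Proof. by move=> bga; rewrite /F45; tlift_beta. Qed.

Lemma F45_tmul1 (ga : C -> C -> A) c d : bilin ga -> F45 ga (tmul CA c 1) d = ga c d.
Proof. by move=> bga; rewrite F45E // lactHom1 //; lin_tac. Qed.

Lemma F45_ractCA ga x (a : A) : V4 ga -> F45 ga (ractCA x a) = ractHom (F45 ga x) a.
Proof.
move=> Vga; have bga := V4_bilin Vga; case: Vga => _ _ ga_twist _.
apply: functional_extensionality => d; tensor_ind x => c b.
rewrite /ractHom F45E // ractCA_tmul; tlift_push (fun x => F45 ga x d).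
transitivity (tlift HA (fun h a' => tlift HA (fun g b0 => tlift HA (fun g' a0 =>
  (b0 * a0) * ga (act c h) (act (act d g) g')) (rho a')) (rho b)) (rho a)).
  by apply: tlift_extP => h a0; rewrite F45E // lactHomM //; apply: bilin_r.
rewrite tlift_exchange; try solve [lin_tac].
transitivity (tlift HA (fun g b0 => b0 * (ga c (act d g) * a)) (rho b)).
  apply: tlift_extP => g b0; rewrite -ga_twist /twistA; tlift_push (fun z => b0 * z).
  apply: tlift_extP => h a'; tlift_push (fun z => b0 * z).
  by apply: tlift_extP => g' a0; rewrite mulrA.
by rewrite /lactHom; tlift_push (fun z => z * a); apply: tlift_extP => g b0; rewrite mulrA.
Qed.

Lemma F45_V5 ga : V4 ga -> V5 (F45 ga).
Proof.
move=> Vga; have bga := V4_bilin Vga; have [_ _ _ ga_D] := Vga.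
have lF d : lin (fun x => F45 ga x d) by lin_tac.
split.
- by move=> x; lin_tac.
- by move=> a x x' d; apply: lF.
- move=> a x; apply: functional_extensionality => d; tensor_ind x => c b.
  have -> : F45 ga (tmul CA c b) = lactHom b (ga c).
    by apply: functional_extensionality => e; rewrite F45E.
  by rewrite lactCA_tmul F45E // lactHomA //; apply: bilin_r.
- by move=> x a; apply: F45_ractCA.
- move=> c d.
  transitivity (tlift CC (fun c1 c2 => tmul CA c1 (ga c2 d)) (Dl c)).
    by apply: tlift_extP => c1 c2; rewrite F45_tmul1.
  by rewrite ga_D; apply: tlift_extP => d1 d2; rewrite F45_tmul1.
Qed.

Lemma G54_V4 ps : V5 ps -> V4 (G54 ps).
Proof.
case=> ps_r ps_l ps_lact ps_ract ps_D; rewrite /G54; split=> //.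
- by move=> a c c' d; rewrite tmulDl tmulZl ps_l.
- move=> c d a; rewrite -/(ractHom (ps (tmul CA c 1)) a d) -ps_ract ractCA_tmul.
  have lps d' : lin (fun x => ps x d') by move=> ? ? ?; apply: ps_l.
  tlift_push (fun x => ps x d); rewrite /twistA; apply: tlift_extP => h a0.
  by rewrite mul1r -[tmul CA _ a0](congr1 (tmul CA _) (mulr1 a0)) -lactCA_tmul ps_lact.
Qed.

Lemma F45K ga : V4 ga -> G54 (F45 ga) = ga.
Proof. by move/V4_bilin=> bga; rewrite /G54; funext2; rewrite F45_tmul1. Qed.

Lemma G54K ps : V5 ps -> F45 (G54 ps) = ps.
Proof.
case=> ps_r ps_l ps_lact _ _; have lps d : lin (fun x => ps x d) by move=> ? ? ?; apply: ps_l.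
apply: functional_extensionality => x; apply: functional_extensionality => d.
tensor_ind x => c a.
by rewrite /F45 /G54; tlift_beta; rewrite -ps_lact lactCA_tmul mulr1.
Qed.

Lemma N4_F45 ga : V4 ga -> N4 ga <-> N5 (F45 ga).
Proof.
move/V4_bilin=> bga; rewrite /N4 /N5.
suff -> : (fun c1 c2 => F45 ga (tmul CA c1 1) c2) = ga by [].
by funext2; rewrite F45_tmul1.
Qed.

Lemma F45_comb a (ga ga' : C -> C -> A) : V4 ga -> V4 ga' ->
  F45 (comb2 a ga ga') = comb2 a (F45 ga) (F45 ga').
Proof.
move=> /V4_bilin bga /V4_bilin bga'; funext2; rewrite /comb2 /F45.
rewrite -tlift_lin_comb; try solve [lin_tac].
apply: tlift_extP => c b; rewrite /lactHom -tlift_lin_comb; try solve [lin_tac].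
by apply: tlift_extP => h a0; rewrite mulrDr scalerAr.
Qed.

End DoiHopf.

Theorem proposition2p1p4 (k : comPzRingType) (D : doi_hopf k) :
  [/\ norm_bij (@V1 k D) (@N1 k D) (@V2 k D) (@N2 k D) (@F12 k D) (@G21 k D)
      /\ (forall (a : k) nu nu', @V1 k D nu -> @V1 k D nu' ->
            @F12 k D (comb1 a nu nu') = comb1 a (@F12 k D nu) (@F12 k D nu')),
      norm_bij (@V2 k D) (@N2 k D) (@V3 k D) (@N3 k D) (@F23 k D) (@G32 k D)
      /\ (forall (a : k) la la', @V2 k D la -> @V2 k D la' ->
            @F23 k D (comb1 a la la') = comb1 a (@F23 k D la) (@F23 k D la')),
      norm_bij (@V3 k D) (@N3 k D) (@V4 k D) (@N4 k D) (@F34 k D) (@G43 k D)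
      /\ (forall (a : k) th th', @V3 k D th -> @V3 k D th' ->
            @F34 k D (comb1 a th th') = comb2 a (@F34 k D th) (@F34 k D th'))
    & norm_bij (@V4 k D) (@N4 k D) (@V5 k D) (@N5 k D) (@F45 k D) (@G54 k D)
      /\ (forall (a : k) ga ga', @V4 k D ga -> @V4 k D ga' ->
            @F45 k D (comb2 a ga ga') = comb2 a (@F45 k D ga) (@F45 k D ga'))].
Proof.
split; split.
- by split; [exact: F12_V2 | exact: G21_V1 | exact: F12K | exact: G21K | exact: N1_F12].
- exact: F12_comb.
- split; [exact: F23_V3 | exact: G32_V2 | exact: F23K | | exact: N2_F23].
  by move=> th [lth _ _]; apply: G32K.
- by move=> a la la' _ _; apply: F23_comb.
- split; [exact: F34_V4 | exact: G43_V3 | | | by []].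
  + by move=> th [lth _ _]; apply: F34K.
  + by move=> ga /V4_bilin; apply: G43K.
- by [].
- by split; [exact: F45_V5 | exact: G54_V4 | exact: F45K | exact: G54K | exact: N4_F45].
- exact: F45_comb.
Qed.
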